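(* For every analytic set $S\subseteq(0;1)$ there is a solid closed set $A\subseteq 2^{\omega}$ such that $\operatorname{ran}\mathcal{D}_A=\{0,1\}\cup S$, and there is also a solid open set $A'\subseteq 2^{\omega}$ such that $\operatorname{ran}\mathcal{D}_{A'}=\{0,1\}\cup S$.
   Context: $2^{\omega}$ is the Cantor space of infinite binary sequences with the product topology; for a finite binary sequence $s$ let $N_s=\{x\in 2^\omega: s\subset x\}$. $\mu$ is the coin-tossing probability measure on $2^\omega$, i.e. the unique Borel probability measure with $\mu(N_s)=2^{-\mathrm{lh}(s)}$. For a measurable $A\subseteq 2^\omega$ and $z\in 2^\omega$, the density of $A$ at $z$ is $\mathcal{D}_A(z)=\lim_{n\to\infty}\mu(A\cap N_{z\restriction n})/\mu(N_{z\restriction n})$, defined only when the limit exists; $\operatorname{ran}\mathcal{D}_A$ is the set of values $\mathcal{D}_A(z)$ over all $z$ at which the limit exists. A point $z$ is blurry for $A$ if $\mathcal{D}_A(z)$ does not exist. $A$ is solid if no point of $2^\omega$ is blurry for $A$. *)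

From HB Require Import structures.
From mathcomp Require Import all_boot all_order all_algebra.
From mathcomp Require Import all_classical all_reals all_analysis.
Set Implicit Arguments. Unset Strict Implicit. Unset Printing Implicit Defensive.
Import Order.TTheory GRing.Theory Num.Theory numFieldNormedType.Exports.
Local Open Scope classical_set_scope.
Local Open Scope ring_scope.

Definition cantor := nat -> bool.

Definition cyl (s : seq bool) : set cantor :=
  [set x | forall i, (i < size s)%N -> x i = nth false s i].

Definition restr (z : cantor) (n : nat) : seq bool := mkseq z n.

(* The set of cylinders; the sigma-algebra it generates is the Borel
   sigma-algebra of the product topology on 2^omega. *)
Definition cylinders : set (set cantor) := range cyl.

Definition cantorB := g_sigma_algebraType cylinders.

(* Product topology on 2^omega, written out via its basis of cylinders. *)
Definition c_open (A : set cantor) : Prop :=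
  forall x, A x -> exists n, cyl (restr x n) `<=` A.
Definition c_closed (A : set cantor) : Prop := c_open (~` A).

Definition dens_ratio (R : realType) (mu : set cantorB -> \bar R)
  (A : set cantor) (z : cantor) (n : nat) : R :=
  fine (mu (A `&` cyl (restr z n))) / fine (mu (cyl (restr z n))).

Definition density_is (R : realType) (mu : set cantorB -> \bar R)
  (A : set cantor) (z : cantor) (l : R) : Prop :=
  dens_ratio mu A z @ \oo --> l.

Definition ran_density (R : realType) (mu : set cantorB -> \bar R)
  (A : set cantor) : set R :=
  [set l | exists z, density_is mu A z l].

Definition blurry (R : realType) (mu : set cantorB -> \bar R)
  (A : set cantor) (z : cantor) : Prop :=
  ~ exists l, density_is mu A z l.

Definition solid (R : realType) (mu : set cantorB -> \bar R)
  (A : set cantor) : Prop := forall z, ~ blurry mu A z.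

(* Baire space omega^omega with the product topology (discrete nat);
   continuity of f : omega^omega -> R written out with the basic
   neighbourhoods {y | y agrees with x below n}. *)
Definition baire_continuous (R : realType) (f : (nat -> nat) -> R) : Prop :=
  forall (x : nat -> nat) (e : R), 0 < e ->
    exists n : nat, forall y : nat -> nat,
      (forall i, (i < n)%N -> y i = x i) -> `|f y - f x| < e.

Definition analytic (R : realType) (S : set R) : Prop :=
  S = set0 \/ exists f : (nat -> nat) -> R, baire_continuous f /\ range f = S.

Definition coin_tossing (R : realType) (mu : {measure set cantorB -> \bar R}) : Prop :=
  forall s : seq bool, mu (cyl s) = ((2 ^- size s : R))%:E.

(* Interleave the coordinates of 2^omega: even coordinates carry data bits,
   odd ones steer along the spine, the closed null set of points whose odd
   coordinates are all 1.  Given V : seq bool -> [0, 1], below the node where a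
   point leaves the spine after reading the data word u, place a clopen set
   whose relative measure is V u up to 2^-|u| (a binary expansion of V u).  The
   open set is the union of these pieces, the closed set adds the spine.  Off
   the spine both sets are clopen near the point, so the density there is 0 or
   1.  At a spine point z, the relative measure x_j of the node of depth 2j is
   the average of two pieces and two deeper nodes, so x_j ~ (x_(j+1) + 3 l) / 4
   as soon as V is close to l on all short extensions of the data of z; this
   recursion contracts, hence x_j -> l.  For S = f(omega^omega), V u applies f
   to the run-length decoding of the first half of u: along every branch V
   converges to some f x, and f x is reached along a branch encoding x. *)

From HB Require Import structures.
From mathcomp Require Import all_boot all_order all_algebra.
From mathcomp Require Import all_classical all_reals all_analysis.
From mathcomp Require Import ring lra zify.
Set Implicit Arguments. Unset Strict Implicit. Unset Printing Implicit Defensive.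
Import Order.TTheory GRing.Theory Num.Theory numFieldNormedType.Exports.

Lemma mkseqD (T : Type) (f : nat -> T) m n :
  mkseq f (m + n) = mkseq f m ++ mkseq (fun i => f (m + i)) n.
Proof.
rewrite /mkseq iotaD map_cat add0n; congr (_ ++ _).
by rewrite -{1}(addn0 m) iotaDl -map_comp.
Qed.

Lemma take_mkseq (T : Type) (f : nat -> T) k n :
  take k (mkseq f n) = mkseq f (minn k n).
Proof. by rewrite /mkseq -map_take take_iota. Qed.

Lemma mkseq_cons (T : Type) (f : nat -> T) n :
  mkseq f n.+1 = f 0 :: mkseq (fun i => f i.+1) n.
Proof. by rewrite /mkseq /= -add1n iotaDl -map_comp. Qed.

Lemma mkseq_const (T : Type) (x : T) n : mkseq (fun=> x) n = nseq n x.
Proof. by elim: n => // n IH; rewrite mkseqS IH -[in RHS]addn1 nseqD cats1. Qed.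

Definition rl_step (st : seq nat * nat) (b : bool) : seq nat * nat :=
  if b then (st.1, st.2.+1) else (rcons st.1 st.2, 0).

(* Run-length decoding: the lengths of the maximal blocks of [true]s that are
   closed by a [false]; an unclosed final block is discarded. *)
Definition rl_decode (u : seq bool) : seq nat := (foldl rl_step ([::], 0) u).1.

Definition rl_encode (l : seq nat) : seq bool :=
  flatten (map (fun c => rcons (nseq c true) false) l).

Lemma rl_step_prefix st u : exists t, (foldl rl_step st u).1 = st.1 ++ t.
Proof.
elim: u st => [|b u IH] st /=; first by exists [::]; rewrite cats0.
have [t ->] := IH (rl_step st b); case: b => /=; first by exists t.
by exists (st.2 :: t); rewrite cat_rcons.
Qed.

Lemma rl_decode_cat u v : exists t, rl_decode (u ++ v) = rl_decode u ++ t.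
Proof. by rewrite /rl_decode foldl_cat; apply: rl_step_prefix. Qed.

Lemma rl_step_nseq_true st n : foldl rl_step st (nseq n true) = (st.1, st.2 + n).
Proof.
elim: n st => [|n IH] [t c] /=; first by rewrite addn0.
by rewrite IH /= addnS.
Qed.

Lemma rl_decode_cat_nseq_true u n : rl_decode (u ++ nseq n true) = rl_decode u.
Proof. by rewrite /rl_decode foldl_cat rl_step_nseq_true. Qed.

Lemma size_rl_decode u : size (rl_decode u) = count negb u.
Proof.
suff gen st : size (foldl rl_step st u).1 = size st.1 + count negb u.
  by rewrite /rl_decode gen.
elim: u st => [|b u IH] st /=; first by rewrite addn0.
by rewrite IH; case: b => /=; rewrite ?size_rcons; lia.
Qed.

Lemma rl_encode_cat l1 l2 : rl_encode (l1 ++ l2) = rl_encode l1 ++ rl_encode l2.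
Proof. by rewrite /rl_encode map_cat flatten_cat. Qed.

Lemma rl_encodeK : cancel rl_encode rl_decode.
Proof.
suff gen l : foldl rl_step ([::], 0) (rl_encode l) = (l, 0) by move=> l; rewrite /rl_decode gen.
elim/last_ind: l => [//|l c IH].
rewrite -cats1 rl_encode_cat foldl_cat IH /rl_encode /= cats0 -cats1 foldl_cat.
by rewrite rl_step_nseq_true /= cats1.
Qed.

Lemma size_rl_encode l : size l <= size (rl_encode l).
Proof.
elim: l => [//|c l IH]; rewrite -cat1s rl_encode_cat size_cat /=.
rewrite size_cat {1}/rl_encode /= cats0 size_rcons; lia.
Qed.

Local Open Scope classical_set_scope.
Local Open Scope ring_scope.

Lemma cyl_restr (z : cantor) n : cyl (restr z n) z.
Proof. by move=> i; rewrite size_mkseq => hi; rewrite nth_mkseq. Qed.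

Lemma cyl_restrP (y z : cantor) n : cyl (restr z n) y -> forall i, (i < n)%N -> y i = z i.
Proof. by move=> h i hi; rewrite h ?size_mkseq // nth_mkseq. Qed.

Lemma restrS (z : cantor) n : restr z n.+1 = rcons (restr z n) (z n).
Proof. by rewrite /restr mkseqS. Qed.

Lemma cyl_nil : cyl [::] = setT.
Proof. by apply/seteqP; split => // y _ i. Qed.

Lemma cyl_rcons s b y : cyl (rcons s b) y <-> cyl s y /\ y (size s) = b.
Proof.
split.
  move=> h; split; last by rewrite h ?nth_rcons ?ltnn ?eqxx // size_rcons.
  by move=> i hi; rewrite h ?nth_rcons ?hi // size_rcons ltnS ltnW.
move=> [h hb] i; rewrite size_rcons ltnS leq_eqVlt nth_rcons => /orP[/eqP ->|hi].
  by rewrite ltnn eqxx.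
by rewrite hi h.
Qed.

Lemma cylU_rcons s : cyl s = cyl (rcons s false) `|` cyl (rcons s true).
Proof.
apply/seteqP; split => y; last by case=> /cyl_rcons [].
by move=> hy; case hb: (y (size s)); [right|left]; apply/cyl_rcons.
Qed.

Lemma cylI_rcons s : cyl (rcons s false) `&` cyl (rcons s true) = set0.
Proof.
apply/seteqP; split => // y [/cyl_rcons [_ h1] /cyl_rcons [_ h2]].
by rewrite h1 in h2.
Qed.

Definition prefix_determined (n : nat) (B : set cantor) :=
  forall y y', (forall i, (i < n)%N -> y i = y' i) -> B y -> B y'.

Fixpoint bitseqs (n : nat) : seq (seq bool) :=
  if n is n'.+1 then map (cons false) (bitseqs n') ++ map (cons true) (bitseqs n')
  else [:: [::]].

Lemma mem_bitseqs n s : size s = n -> s \in bitseqs n.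
Proof.
elim: n s => [|n IH] [|b s] //= [hs].
have inj (b1 : bool) : injective (cons b1) by move=> x y [].
by rewrite mem_cat; case: b; rewrite (mem_map (inj _)) IH ?orbT.
Qed.

Lemma measurable_cyl s : measurable (cyl s : set cantorB).
Proof. by apply: sub_sigma_algebra; exists s. Qed.

Lemma measurable_prefix_determined n (B : set cantor) :
  prefix_determined n B -> measurable (B : set cantorB).
Proof.
move=> hB.
pose good s := size s = n /\ exists x, cyl s x /\ B x.
have -> : B = \big[setU/set0]_(s <- bitseqs n) (cyl s `&` [set _ : cantor | good s]).
  rewrite -bigcup_seq; apply/seteqP; split => y.
    move=> By; exists (restr y n); first by rewrite /= mem_bitseqs // size_mkseq.
    split; first exact: cyl_restr.
    by split; [rewrite size_mkseq | exists y; split => //; exact: cyl_restr].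
  move=> [s _ [hy [hs [x [hx Bx]]]]]; apply: hB Bx => i hi.
  by rewrite hx ?hy ?hs.
apply: bigsetU_measurable => s _; apply: measurableI; first exact: measurable_cyl.
have [h|h] := pselect (good s).
  by rewrite (_ : [set _ | _] = setT) //; apply/seteqP; split.
by rewrite (_ : [set _ | _] = set0) //; apply/seteqP; split.
Qed.

Section CoinTossing.
Variables (R : realType) (mu : {measure set cantorB -> \bar R}).
Hypothesis hmu : coin_tossing mu.

Definition mreal (B : set cantor) : R := fine (mu B).

Lemma mu_mreal (B : set cantor) : measurable (B : set cantorB) -> mu B = (mreal B)%:E.
Proof.
move=> mB; have le1 : (mu B <= 1)%E.
  have := hmu [::]; rewrite cyl_nil /= expr0 invr1 => <-.
  by apply: le_measure => //; rewrite inE.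
by rewrite /mreal fineK // ge0_fin_numE ?measure_ge0 // (le_lt_trans le1) ?ltry.
Qed.

Lemma mreal_ge0 (B : set cantor) : 0 <= mreal B.
Proof. exact/fine_ge0/measure_ge0. Qed.

Lemma mreal0 : mreal set0 = 0.
Proof. by rewrite /mreal measure0. Qed.

Lemma mreal_cyl s : mreal (cyl s) = 2 ^- size s.
Proof. by rewrite /mreal hmu. Qed.

Lemma le_mreal (B C : set cantor) : measurable (B : set cantorB) ->
  measurable (C : set cantorB) -> B `<=` C -> mreal B <= mreal C.
Proof.
move=> mB mC BC; rewrite -lee_fin -mu_mreal // -mu_mreal //.
by apply: le_measure => //; rewrite inE.
Qed.

Lemma mrealU (B C : set cantor) : measurable (B : set cantorB) ->
  measurable (C : set cantorB) -> B `&` C = set0 -> mreal (B `|` C) = mreal B + mreal C.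
Proof.
move=> mB mC BC; apply: EFin_inj.
by rewrite EFinD -!mu_mreal ?measureU //; exact: measurableU.
Qed.

Definition cyl_density (B : set cantor) (s : seq bool) : R :=
  mreal (B `&` cyl s) * 2 ^+ size s.

Lemma dens_ratioE (B : set cantor) z n :
  dens_ratio mu B z n = cyl_density B (restr z n).
Proof.
by rewrite /dens_ratio /cyl_density -/(mreal _) -/(mreal (cyl _)) mreal_cyl size_mkseq invrK.
Qed.

Lemma cyl_density_split (B : set cantor) s : measurable (B : set cantorB) ->
  cyl_density B s = (cyl_density B (rcons s false) + cyl_density B (rcons s true)) / 2.
Proof.
move=> mB; rewrite /cyl_density !size_rcons {1}cylU_rcons setIUr mrealU.
- by rewrite exprS; field.
- by apply: measurableI => //; exact: measurable_cyl.
- by apply: measurableI => //; exact: measurable_cyl.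
- by rewrite setIACA cylI_rcons setI0.
Qed.

Lemma cyl_density_in01 (B : set cantor) s : measurable (B : set cantorB) ->
  0 <= cyl_density B s <= 1.
Proof.
move=> mB; rewrite /cyl_density mulr_ge0 ?mreal_ge0 ?exprn_ge0 //=.
rewrite -ler_pdivlMr ?exprn_gt0 // div1r -mreal_cyl.
have mC := measurable_cyl s.
by apply: le_mreal => //; apply: measurableI.
Qed.

Lemma cyl_density_eq0 (B : set cantor) s : B `&` cyl s = set0 -> cyl_density B s = 0.
Proof. by rewrite /cyl_density => ->; rewrite mreal0 mul0r. Qed.

Lemma cyl_density_eq1 (B : set cantor) s : cyl s `<=` B -> cyl_density B s = 1.
Proof.
by move=> sB; rewrite /cyl_density (setIidr sB) mreal_cyl mulVf // expf_neq0.
Qed.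

End CoinTossing.

Definition bits_from (y : cantor) (a n : nat) : seq bool := mkseq (fun i => y (a + i)%N) n.

Lemma bits_fromS y a n : bits_from y a n.+1 = y a :: bits_from y a.+1 n.
Proof.
rewrite /bits_from mkseq_cons addn0; congr (_ :: _).
by apply: eq_mkseq => i; rewrite addSnnS.
Qed.

Lemma eq_bits_from y y' a n : (forall i, (i < a + n)%N -> y i = y' i) ->
  bits_from y a n = bits_from y' a n.
Proof.
move=> h; apply: (@eq_from_nth _ false); rewrite ?size_mkseq // => i hi.
by rewrite !nth_mkseq // h // ltn_add2l.
Qed.

Section DyadicSet.
Variables (R : realType) (mu : {measure set cantorB -> \bar R}).
Hypothesis hmu : coin_tossing mu.

(* [dyadic_le q bs] holds iff 0.bs + 2^-(size bs) <= q, reading [bs] as binary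
   digits: the dyadic interval coded by [bs] lies below [q]. *)
Fixpoint dyadic_le (q : R) (bs : seq bool) : bool :=
  if bs is b :: bs' then dyadic_le (2 * q - b%:R) bs' else 1 <= q.

Lemma dyadic_le_le0 q bs : q <= 0 -> dyadic_le q bs = false.
Proof.
elim: bs q => [|b bs IH] q hq /=; first by apply/negbTE; rewrite -ltNge; lra.
by apply: IH; case: b; rewrite /= ?mulr1n ?mulr0n; lra.
Qed.

Lemma dyadic_le_ge1 q bs : 1 <= q -> dyadic_le q bs.
Proof.
elim: bs q => [|b bs IH] q hq //=.
by apply: IH; case: b; rewrite /= ?mulr1n ?mulr0n; lra.
Qed.

Definition dyadic_set (r : seq bool) (q : R) (n : nat) : set cantor :=
  [set y | cyl r y /\ dyadic_le q (bits_from y (size r) n)].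

Lemma measurable_dyadic_set r q n : measurable (dyadic_set r q n : set cantorB).
Proof.
apply: (@measurable_prefix_determined (size r + n)) => y y' h [hr hq]; split.
  by move=> i hi; rewrite -h ?hr // ltn_addr.
by rewrite -(eq_bits_from h).
Qed.

Lemma dyadic_setI_rcons r q n b :
  dyadic_set r q n.+1 `&` cyl (rcons r b) =
  dyadic_set (rcons r b) (2 * q - b%:R) n `&` cyl (rcons r b).
Proof.
rewrite /dyadic_set size_rcons.
apply/seteqP; split => y [[_ hq] /[dup] hc /cyl_rcons [hr hb]]; do !split => //.
  by move: hq; rewrite bits_fromS hb.
by rewrite bits_fromS hb.
Qed.

Lemma cyl_density_dyadic_set n r q : 0 <= q <= 1 ->
  q - 2 ^- n <= cyl_density mu (dyadic_set r q n) r <= q.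
Proof.
elim: n r q => [|n IH] r q /andP[q0 q1].
  rewrite expr0 invr1; have [q_ge1|q_lt1] := lerP 1 q.
    rewrite (cyl_density_eq1 hmu); first by apply/andP; split; lra.
    by move=> y hy; split.
  rewrite cyl_density_eq0; first by apply/andP; split; lra.
  by apply/seteqP; split => // y [[_]]; rewrite /= leNgt q_lt1.
have dyadic_child b : cyl_density mu (dyadic_set r q n.+1) (rcons r b) =
    cyl_density mu (dyadic_set (rcons r b) (2 * q - b%:R) n) (rcons r b).
  by rewrite /cyl_density dyadic_setI_rcons.
rewrite (cyl_density_split hmu _ (measurable_dyadic_set r q n.+1)) !dyadic_child.
rewrite /= mulr0n mulr1n subr0.
have halfP : 2 ^- n = 2 * 2 ^- n.+1 :> R.
  by rewrite exprS invrM ?unitfE ?expf_neq0 //; field.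
have [q_small|q_large] := lerP q (1 / 2).
  rewrite [cyl_density _ _ (rcons r true)]cyl_density_eq0; last first.
    apply/seteqP; split => // y [[_]]; rewrite dyadic_le_le0 //; lra.
  have /andP[] := IH (rcons r false) (2 * q) ltac:(apply/andP; split; lra).
  rewrite halfP; lra.
rewrite [cyl_density _ _ (rcons r false)](cyl_density_eq1 hmu); last first.
  by move=> y hy; split => //; apply: dyadic_le_ge1; lra.
have /andP[] := IH (rcons r true) (2 * q - 1) ltac:(apply/andP; split; lra).
rewrite halfP; lra.
Qed.

End DyadicSet.

Definition spine : set cantor := [set y | forall i, y (2 * i + 1)%N = true].

Definition leaves_spine_at (y : cantor) (k : nat) : Prop :=
  (forall i, (i < k)%N -> y (2 * i + 1)%N = true) /\ y (2 * k + 1)%N = false.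

Definition data_bits (y : cantor) (n : nat) : seq bool := mkseq (fun i => y (2 * i)%N) n.

Lemma leaves_spine_at_inj y k k' : leaves_spine_at y k -> leaves_spine_at y k' -> k = k'.
Proof.
move=> [h1 h2] [h1' h2']; case: (ltngtP k k') => // hk.
  by rewrite h1' in h2.
by rewrite h1 in h2'.
Qed.

Lemma leaves_spine_at_spine y k : leaves_spine_at y k -> ~ spine y.
Proof. by move=> [_ hk] /(_ k); rewrite hk. Qed.

Lemma exists_leaves_spine_at y : ~ spine y -> exists k, leaves_spine_at y k.
Proof.
move=> hy; have hex : exists i, ~~ y (2 * i + 1)%N.
  by apply/not_existsP => hn; apply: hy => i; have := hn i; case: (y _).
case: (ex_minnP hex) => k hk hmin; exists k; split; last by move: hk; case: (y _).
by move=> i hi; apply/negPn/negP => /hmin; lia.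
Qed.

Lemma measurable_spine : measurable (spine : set cantorB).
Proof.
rewrite (_ : spine = \bigcap_i [set y : cantor | y (2 * i + 1)%N = true]).
  apply: bigcapT_measurable => i.
  by apply: (@measurable_prefix_determined (2 * i + 2)) => y y' h /= <-; rewrite h //; lia.
by apply/seteqP; split => [y h i _|y h i]; exact: h.
Qed.

Section Construction.
Variables (R : realType) (V : seq bool -> R).

(* The [k.+1] bits following the node where [y] leaves the spine are compared,
   as a binary fraction, with [V] of the data read so far; this gives the node
   the relative measure [V] up to [2^-(k+1)] (lemma [cyl_density_dyadic_set]). *)
Definition fills (y : cantor) (k : nat) : bool :=
  dyadic_le (V (data_bits y k.+1)) (bits_from y (2 * k + 2) k.+1).

Definition A_piece (k : nat) : set cantor := [set y | leaves_spine_at y k /\ fills y k].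

Definition A_open : set cantor := [set y | exists k, A_piece k y].

Definition A_closed : set cantor := A_open `|` spine.

Lemma prefix_determined_A_piece k : prefix_determined (3 * k + 3) (A_piece k).
Proof.
move=> y y' h [[h1 h2] hf]; split; first split.
- by move=> i hi; rewrite -h ?h1 //; lia.
- by rewrite -h //; lia.
move: hf; rewrite /fills; have -> : data_bits y k.+1 = data_bits y' k.+1.
  apply: (@eq_from_nth _ false); rewrite ?size_mkseq // => i hi.
  by rewrite !nth_mkseq // h //; lia.
by rewrite -(@eq_bits_from y y') // => i hi; apply: h; lia.
Qed.

Lemma measurable_A_open : measurable (A_open : set cantorB).
Proof.
rewrite (_ : A_open = \bigcup_k A_piece k); last first.
  by apply/seteqP; split => y [k]; [move=> h; exists k | exists k].
apply: bigcupT_measurable => k.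
apply: (@measurable_prefix_determined (3 * k + 3)); exact: prefix_determined_A_piece.
Qed.

Lemma measurable_A_closed : measurable (A_closed : set cantorB).
Proof. exact: measurableU measurable_A_open measurable_spine. Qed.

Section Sandwich.
Variable B : set cantor.
Hypotheses (hAB : A_open `<=` B) (hBA : B `<=` A_closed).

Lemma mem_off_spine y : ~ spine y -> B y <-> A_open y.
Proof. by move=> hy; split => [/hBA [] //|/hAB]. Qed.

Lemma mem_near_leaving y y' k : leaves_spine_at y k ->
  (forall i, (i < 3 * k + 3)%N -> y i = y' i) -> B y' <-> fills y k.
Proof.
move=> hk h; have hk' : leaves_spine_at y' k.
  by case: hk => h1 h2; split => [i hi|]; [rewrite -h ?h1 // | rewrite -h //]; lia.
have h' i : (i < 3 * k + 3)%N -> y' i = y i by move=> hi; rewrite h.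
rewrite (mem_off_spine (leaves_spine_at_spine hk')); split.
  move=> [k' hk'']; have ek := leaves_spine_at_inj hk' (proj1 hk''); subst k'.
  by case: (prefix_determined_A_piece h' hk'').
by move=> hf; exists k; exact: prefix_determined_A_piece h (conj hk hf).
Qed.

End Sandwich.

Lemma A_open_open : c_open A_open.
Proof.
move=> y [k [hk hf]]; exists (3 * k + 3)%N => y' hy'.
have agree i : (i < 3 * k + 3)%N -> y i = y' i by move=> hi; rewrite (cyl_restrP hy').
exact/(mem_near_leaving (@subset_refl _ _) (@subsetUl _ _ _) hk agree).
Qed.

Lemma A_closed_closed : c_closed A_closed.
Proof.
move=> y hy; have [k hk] := exists_leaves_spine_at (fun h => hy (or_intror h)).
exists (3 * k + 3)%N => y' hy' Ay'.
have agree i : (i < 3 * k + 3)%N -> y i = y' i by move=> hi; rewrite (cyl_restrP hy').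
have hf := (mem_near_leaving (@subsetUl _ _ _) (@subset_refl _ _) hk agree).1 Ay'.
by apply: hy; left; exists k.
Qed.

End Construction.

Definition on_spine (s : seq bool) :=
  forall i, (2 * i + 1 < size s)%N -> nth false s (2 * i + 1).

Definition data_of (s : seq bool) (j : nat) : seq bool :=
  mkseq (fun i => nth false s (2 * i)) j.

Definition spine_leaf (s : seq bool) (b : bool) := rcons (rcons s b) false.
Definition spine_child (s : seq bool) (b : bool) := rcons (rcons s b) true.

Lemma cyl_spine_leaf s b y : cyl (spine_leaf s b) y <->
  [/\ cyl s y, y (size s) = b & y (size s).+1 = false].
Proof.
rewrite /spine_leaf; split.
  by move=> /cyl_rcons [/cyl_rcons [h1 h2]]; rewrite size_rcons.
by move=> [h1 h2 h3]; apply/cyl_rcons; rewrite size_rcons; split => //; apply/cyl_rcons.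
Qed.

Section SpineNode.
Variables (s : seq bool) (j : nat).
Hypotheses (hs : on_spine s) (size_s : size s = (2 * j)%N).

Lemma spine_leaf_leaves_spine_at b y : cyl (spine_leaf s b) y -> leaves_spine_at y j.
Proof.
move=> /cyl_spine_leaf [h1 _ h3]; split.
  by move=> i hi; rewrite h1 ?hs // size_s; lia.
by rewrite size_s in h3; rewrite -h3; congr y; lia.
Qed.

Lemma spine_leaf_data_bits b y : cyl (spine_leaf s b) y ->
  data_bits y j.+1 = rcons (data_of s j) b.
Proof.
move=> /cyl_spine_leaf [h1 h2 _].
apply: (@eq_from_nth _ false); rewrite ?size_mkseq ?size_rcons ?size_mkseq // => i hi.
rewrite nth_mkseq // nth_rcons size_mkseq.
case: ltnP => hij; first by rewrite nth_mkseq // h1 // size_s; lia.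
have -> : i = j by lia.
by rewrite eqxx -h2 size_s.
Qed.

Lemma on_spine_child b : on_spine (spine_child s b).
Proof.
move=> i; rewrite /spine_child !size_rcons size_s => hi.
rewrite !nth_rcons ?size_rcons size_s.
case: ltnP => h1; last by case: eqP => //; lia.
case: ltnP => h2; first by rewrite hs // size_s.
by case: eqP => //; lia.
Qed.

Lemma size_spine_child b : size (spine_child s b) = (2 * j.+1)%N.
Proof. by rewrite !size_rcons size_s; lia. Qed.

Lemma data_of_child b : data_of (spine_child s b) j.+1 = rcons (data_of s j) b.
Proof.
apply: (@eq_from_nth _ false); rewrite ?size_mkseq ?size_rcons ?size_mkseq // => i hi.
rewrite nth_mkseq // [RHS]nth_rcons size_mkseq !nth_rcons size_rcons size_s.
have -> : (2 * i < (2 * j).+1)%N by lia.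
have [hij|hij] := ltnP i j; first by rewrite ifT ?nth_mkseq //; lia.
have -> : i = j by lia.
by rewrite !ltnn !eqxx.
Qed.

End SpineNode.

Lemma on_spine_restr z n : spine z -> on_spine (restr z n).
Proof. by move=> hz i; rewrite size_mkseq => hi; rewrite nth_mkseq. Qed.

Lemma data_of_restr z j : data_of (restr z (2 * j)) j = data_bits z j.
Proof.
apply: (@eq_from_nth _ false); rewrite ?size_mkseq // => i hi.
by rewrite !nth_mkseq //; lia.
Qed.

Lemma restr_spine_child z j : spine z ->
  restr z (2 * j.+1) = spine_child (restr z (2 * j)) (z (2 * j)%N).
Proof.
move=> hz; have -> : (2 * j.+1 = (2 * j).+2)%N by lia.
by rewrite !restrS /spine_child -(hz j) addn1.
Qed.

Lemma cvg_dist_le (R : realType) (u : nat -> R) (l : R) :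
  (forall e, 0 < e -> exists N, forall n, (N <= n)%N -> `|u n - l| <= e) ->
  u @ \oo --> l.
Proof.
move=> H; apply/cvgrPdist_le => e he; have [N hN] := H e he.
by apply: filterS (nbhs_infty_ge N) => n hn; rewrite distrC; exact: hN.
Qed.

Lemma exists_pow2_le (R : realType) (e : R) : 0 < e -> exists K : nat, 2 ^- K <= e.
Proof.
move=> he; exists (Num.bound e^-1).
have h1 : e^-1 < (Num.bound e^-1)%:R by rewrite archi_boundP // invr_ge0 ltW.
have h2 : ((Num.bound e^-1)%:R : R) <= 2 ^+ Num.bound e^-1.
  by rewrite -natrX ler_nat ltnW // ltn_expl.
rewrite -[leRHS]invrK lef_pV2 ?posrE ?exprn_gt0 ?invr_gt0 //; lra.
Qed.

Lemma pow2_le_pow2 (R : realType) m n : (m <= n)%N -> 2 ^- n <= 2 ^- m :> R.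
Proof. by move=> mn; rewrite lef_pV2 ?posrE ?exprn_gt0 // ler_eXn2l // ?ltr1n. Qed.

(* The recursion [x_j ~ (x_(j+1) + 3 l) / 4] contracts errors by a factor 4. *)
Lemma contraction_bound (R : realType) (x : nat -> R) (l c : R) J :
  (forall j, `|x j - l| <= 2) ->
  (forall j, (J <= j)%N -> `|4 * x j - x j.+1 - 3 * l| <= c) ->
  forall N j, (J <= j)%N -> `|x j - l| <= c / 3 + 2 / 4 ^+ N.
Proof.
move=> hb hs; have c0 : 0 <= c := le_trans (normr_ge0 _) (hs J (leqnn J)).
elim=> [|N IH] j hj; first by rewrite expr0 divr1; have := hb j; lra.
have := IH j.+1 (leqW hj); have := hs j hj.
have -> : 2 / 4 ^+ N.+1 = 2 / 4 ^+ N / 4 :> R.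
  by rewrite exprS invrM ?unitfE ?expf_neq0 // mulrA.
move: (2 / 4 ^+ N) => t; rewrite !ler_norml => /andP[h1 h1'] /andP[h2 h2'].
by apply/andP; split; lra.
Qed.

Definition converges_along (R : realType) (V : seq bool -> R) (w : nat -> bool) (l : R) :=
  forall e, 0 < e -> forall K : nat, exists J, forall j v, (J <= j)%N ->
    (0 < size v <= K)%N -> `|V (mkseq w j ++ v) - l| <= e.

Section Densities.
Variables (R : realType) (mu : {measure set cantorB -> \bar R}).
Hypothesis hmu : coin_tossing mu.
Variables (V : seq bool -> R) (B : set cantor).
Hypotheses (mB : measurable (B : set cantorB))
  (hAB : A_open V `<=` B) (hBA : B `<=` A_closed V).

Lemma density_is_restr z l : cyl_density mu B \o restr z @ \oo --> l -> density_is mu B z l.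
Proof.
rewrite /density_is (_ : dens_ratio mu B z = cyl_density mu B \o restr z) //.
by apply: funext => n; rewrite (dens_ratioE hmu).
Qed.

Lemma density_leaving_spine y k : leaves_spine_at y k ->
  density_is mu B y (if fills V y k then 1 else 0).
Proof.
move=> hk; apply: density_is_restr; apply: cvg_dist_le => e he; exists (3 * k + 3)%N => n hn /=.
have near y' : cyl (restr y n) y' -> B y' <-> fills V y k.
  move=> hy'; apply: (mem_near_leaving hAB hBA hk) => i hi.
  by rewrite (cyl_restrP hy') //; lia.
case hf: (fills V y k).
  rewrite (cyl_density_eq1 hmu) ?subrr ?normr0 ?ltW // => y' /near.
  by rewrite hf => ->.
rewrite cyl_density_eq0 ?subrr ?normr0 ?ltW //.
by apply/seteqP; split => // y' [By /near /iffLR /(_ By)]; rewrite hf.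
Qed.

Hypothesis hV : forall u, 0 <= V u <= 1.

Section SpineNodeDensity.
Variables (s : seq bool) (j : nat).
Hypotheses (hs : on_spine s) (size_s : size s = (2 * j)%N).

Lemma BI_spine_leaf b : B `&` cyl (spine_leaf s b) =
  dyadic_set (spine_leaf s b) (V (rcons (data_of s j) b)) j.+1 `&` cyl (spine_leaf s b).
Proof.
have size_leaf : size (spine_leaf s b) = (2 * j + 2)%N by rewrite !size_rcons size_s; lia.
have mem y : cyl (spine_leaf s b) y ->
    B y <-> dyadic_set (spine_leaf s b) (V (rcons (data_of s j) b)) j.+1 y.
  move=> hy; have hk := spine_leaf_leaves_spine_at hs size_s hy.
  have := mem_near_leaving hAB hBA hk (fun _ _ => erefl).
  rewrite /fills (spine_leaf_data_bits size_s hy) /dyadic_set /= size_leaf.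
  by move=> ->; split => [|[]].
by apply/seteqP; split => y [By hy]; split => //; apply/(mem y hy).
Qed.

Lemma cyl_density_leaf b :
  V (rcons (data_of s j) b) - 2 ^- j.+1 <= cyl_density mu B (spine_leaf s b) <=
  V (rcons (data_of s j) b).
Proof.
rewrite /cyl_density BI_spine_leaf -/(cyl_density mu _ _).
exact: cyl_density_dyadic_set.
Qed.

Lemma cyl_density_node : cyl_density mu B s =
  (cyl_density mu B (spine_leaf s false) + cyl_density mu B (spine_child s false) +
   cyl_density mu B (spine_leaf s true) + cyl_density mu B (spine_child s true)) / 4.
Proof.
rewrite (cyl_density_split hmu s mB) !(cyl_density_split hmu (rcons s _) mB).
by rewrite /spine_leaf /spine_child; field.
Qed.

End SpineNodeDensity.

Lemma cyl_density_spine_bounds k s j (lo hi e : R) : on_spine s -> size s = (2 * j)%N ->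
  2 ^- j.+1 <= e -> 0 <= hi ->
  (forall v, (0 < size v <= k)%N -> lo <= V (data_of s j ++ v) <= hi) ->
  (lo - e) * (1 - 2 ^- k) <= cyl_density mu B s <= hi + 2 ^- k.
Proof.
elim: k s j => [|k IH] s j hs size_s he hhi hv.
  have /andP[d0 d1] := cyl_density_in01 hmu s mB.
  by rewrite expr0 invr1 subrr mulr0; apply/andP; split; lra.
rewrite cyl_density_node.
have leaf b : lo - e <= cyl_density mu B (spine_leaf s b) <= hi.
  have /andP[r1 r2] := cyl_density_leaf hs size_s b.
  have /andP[v1 v2] := hv [:: b] isT.
  by rewrite cats1 in v1 v2; apply/andP; split; lra.
have child b :
    (lo - e) * (1 - 2 ^- k) <= cyl_density mu B (spine_child s b) <= hi + 2 ^- k.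
  apply: (IH _ j.+1) => //.
  - exact: (@on_spine_child _ _ hs size_s b).
  - exact: size_spine_child size_s b.
  - by apply: le_trans he; apply: pow2_le_pow2.
  - by move=> v hvs; rewrite data_of_child // cat_rcons; apply: hv => /=; lia.
have halfP : 2 ^- k = 2 * 2 ^- k.+1 :> R.
  by rewrite exprS invrM ?unitfE ?expf_neq0 //; field.
have /andP[a1 a2] := leaf false; have /andP[b1 b2] := leaf true.
have /andP[c1 c2] := child false; have /andP[d1 d2] := child true.
move: c1 c2 d1 d2; rewrite halfP; move: (2 ^- k.+1) => t c1 c2 d1 d2.
by apply/andP; split; lra.
Qed.

Section NearSpine.
Variables (s : seq bool) (j K : nat) (l e : R).
Hypotheses (hs : on_spine s) (size_s : size s = (2 * j)%N) (hl : 0 <= l <= 1).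
Hypotheses (hK : 2 ^- K <= e) (hj : 2 ^- j.+1 <= e).
Hypothesis hVl : forall v, (0 < size v <= K.+1)%N -> `|V (data_of s j ++ v) - l| <= e.

Lemma cyl_density_leaf_near b : `|cyl_density mu B (spine_leaf s b) - l| <= 2 * e.
Proof.
have /andP[r1 r2] := cyl_density_leaf hs size_s b.
have := @hVl [:: b] isT; rewrite cats1 !ler_norml => /andP[v1 v2].
have := hj; move: r1; move: (2 ^- j.+1) => P r1 hP.
by apply/andP; split; lra.
Qed.

Lemma cyl_density_child_near b : `|cyl_density mu B (spine_child s b) - l| <= 3 * e.
Proof.
case/andP: hl => l0 l1; have P0 : 0 <= 2 ^- K :> R by rewrite invr_ge0 exprn_ge0.
have data_child v : (0 < size v <= K)%N ->
    l - e <= V (data_of (spine_child s b) j.+1 ++ v) <= l + e.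
  by move=> hv; rewrite data_of_child // cat_rcons -ler_distl hVl //=; lia.
have /andP[c1 c2] := cyl_density_spine_bounds (@on_spine_child _ _ hs size_s b)
  (size_spine_child size_s b) (le_trans (pow2_le_pow2 _ (leqnSn _)) hj)
  (addr_ge0 l0 (le_trans P0 hK)) data_child.
have := hK; move: c1 c2 P0; move: (2 ^- K) => P c1 c2 P0 hP.
have lP : 0 <= (1 - l) * P by rewrite mulr_ge0 // subr_ge0.
have eP : 0 <= e * P by rewrite mulr_ge0 // (le_trans P0 hP).
by rewrite ler_norml; apply/andP; split; lra.
Qed.

Lemma cyl_density_rcons_near b : `|cyl_density mu B (rcons s b) - l| <=
  (2 * e + `|cyl_density mu B (spine_child s b) - l|) / 2.
Proof.
rewrite (cyl_density_split hmu _ mB) -/(spine_leaf s b) -/(spine_child s b).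
have := cyl_density_leaf_near b; move: (cyl_density mu B (spine_child s b)) => c.
have /andP[c1 c2] : - `|c - l| <= c - l <= `|c - l| by rewrite -ler_norml.
by rewrite !ler_norml => /andP[a1 a2]; apply/andP; split; lra.
Qed.

Lemma cyl_density_spine_recursion b :
  `|4 * cyl_density mu B s - cyl_density mu B (spine_child s b) - 3 * l| <= 7 * e.
Proof.
rewrite cyl_density_node.
have := cyl_density_leaf_near false; have := cyl_density_leaf_near true.
have := cyl_density_child_near false; have := cyl_density_child_near true.
rewrite !ler_norml => /andP[a1 a2] /andP[b1 b2] /andP[c1 c2] /andP[d1 d2].
by case: b; apply/andP; split; lra.
Qed.

End NearSpine.

Lemma density_on_spine z l : spine z -> 0 <= l <= 1 ->
  converges_along V (fun i => z (2 * i)%N) l -> density_is mu B z l.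
Proof.
move=> hz hl hconv; apply: density_is_restr; apply: cvg_dist_le => e0 he0.
have [e he e0E] : exists2 e, 0 < e & e0 = 5 * e.
  by exists (e0 / 5); [rewrite divr_gt0 | field].
have [K hK] := exists_pow2_le he.
have [J hJ] := hconv e he K.+1.
pose x j := cyl_density mu B (restr z (2 * j)).
have size_s j : size (restr z (2 * j)) = (2 * j)%N by rewrite size_mkseq.
have near j : (maxn J K <= j)%N -> 2 ^- j.+1 <= e /\ forall v,
    (0 < size v <= K.+1)%N -> `|V (data_of (restr z (2 * j)) j ++ v) - l| <= e.
  move=> hj; split; first by apply: le_trans hK; apply: pow2_le_pow2; lia.
  by move=> v hv; rewrite data_of_restr; apply: hJ => //; lia.
have recursion j : (maxn J K <= j)%N -> `|4 * x j - x j.+1 - 3 * l| <= 7 * e.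
  move=> /near[hj hVl]; rewrite /x restr_spine_child //.
  exact: cyl_density_spine_recursion (@on_spine_restr z (2 * j) hz) (size_s j) hl hK hj hVl _.
have even_level j : (maxn J K <= j)%N -> `|x j - l| <= e0.
  have bounded j' : `|x j' - l| <= 2.
    have /andP[d0 d1] := cyl_density_in01 hmu (restr z (2 * j')) mB.
    by case/andP: hl => l0 l1; rewrite /x ler_norml; apply/andP; split; lra.
  have four : 2 / 4 ^+ K <= 2 * e.
    rewrite ler_pM2l // (le_trans _ hK) // lef_pV2 ?posrE ?exprn_gt0 //.
    by apply: lerXn2r; rewrite ?nnegrE ?ler_nat.
  move=> hj; have := contraction_bound bounded recursion K hj.
  by move: four; move: (2 / 4 ^+ K) => t; lra.
have odd_level j : (maxn J K <= j)%N ->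
    `|cyl_density mu B (restr z (2 * j).+1) - l| <= e0.
  move=> hj; have [hj' hVl] := near j hj.
  have := cyl_density_rcons_near (@on_spine_restr z (2 * j) hz) (size_s j) hj' hVl (z (2 * j)%N).
  rewrite -restrS -restr_spine_child // -/(x j.+1).
  by have := even_level j.+1 ltac:(lia); lra.
exists (2 * maxn J K)%N => n hn.
have [j [nE|nE]] : exists j, n = (2 * j)%N \/ n = (2 * j).+1.
  by exists n./2; case: (odd n) (odd_double_half n) => <-; [right|left]; lia.
- by rewrite nE; apply: even_level; lia.
- by rewrite nE; apply: odd_level; lia.
Qed.

End Densities.

Definition baire_of_seq (t : seq nat) : nat -> nat := nth 0%N t.

Definition rl_decode_converges (w : nat -> bool) (x : nat -> nat) :=
  forall n, exists P, forall Q, (P <= Q)%N -> forall i, (i < n)%N ->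
    baire_of_seq (rl_decode (mkseq w Q)) i = x i.

Lemma rl_decode_mkseq_prefix (w : nat -> bool) j j' : (j <= j')%N ->
  exists t, rl_decode (mkseq w j') = rl_decode (mkseq w j) ++ t.
Proof. by move=> jj'; rewrite -(subnKC jj') mkseqD; apply: rl_decode_cat. Qed.

Lemma leq_size_rl_decode_mkseq (w : nat -> bool) j j' : (j <= j')%N ->
  (size (rl_decode (mkseq w j)) <= size (rl_decode (mkseq w j')))%N.
Proof. by move=> /(rl_decode_mkseq_prefix w) [t ->]; rewrite size_cat leq_addr. Qed.

Lemma nth_rl_decode_mkseq (w : nat -> bool) j j' i : (j <= j')%N ->
  (i < size (rl_decode (mkseq w j)))%N ->
  nth 0%N (rl_decode (mkseq w j')) i = nth 0%N (rl_decode (mkseq w j)) i.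
Proof. by move=> /(rl_decode_mkseq_prefix w) [t ->] hi; rewrite nth_cat hi. Qed.

Lemma rl_decode_converges_unbounded (w : nat -> bool) (x : nat -> nat) :
  (forall j i, (i < size (rl_decode (mkseq w j)))%N -> nth 0%N (rl_decode (mkseq w j)) i = x i) ->
  (forall n, exists j, (n <= size (rl_decode (mkseq w j)))%N) ->
  rl_decode_converges w x.
Proof.
move=> coh unb n; have [P hP] := unb n; exists P => Q PQ i hi.
by apply: coh; apply: leq_trans (leq_size_rl_decode_mkseq w PQ); apply: leq_trans hP.
Qed.

Lemma rl_decode_converges_ex (w : nat -> bool) : exists x, rl_decode_converges w x.
Proof.
have [[P hP]|finitely] := pselect (exists P, forall i, (P <= i)%N -> w i).
  exists (baire_of_seq (rl_decode (mkseq w P))) => n; exists P => Q PQ i _.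
  have tail : mkseq (fun i => w (P + i)%N) (Q - P) = nseq (Q - P) true.
    by rewrite -mkseq_const; apply: eq_mkseq => k; rewrite hP ?leq_addr.
  by rewrite -(subnKC PQ) mkseqD tail rl_decode_cat_nseq_true.
have unb n : exists j, (n <= size (rl_decode (mkseq w j)))%N.
  elim: n => [|n [j hj]]; first by exists 0%N.
  have [i [ji wi]] : exists i, (j <= i)%N /\ w i = false.
    apply/not_existsP => hn; apply: finitely; exists j => i ji.
    by apply/negPn/negP => /negbTE wi; apply: (hn i).
  exists i.+1; rewrite size_rl_decode mkseqS -cats1 count_cat wi /= addn1 -size_rl_decode.
  exact: leq_trans hj (leq_size_rl_decode_mkseq w ji).
pose J m := xchoose (unb m.+1).
exists (fun m => nth 0%N (rl_decode (mkseq w (J m))) m).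
apply: rl_decode_converges_unbounded => // j i hi.
have hJ : (i < size (rl_decode (mkseq w (J i))))%N := xchooseP (unb i.+1).
rewrite -(nth_rl_decode_mkseq (leq_maxl j (J i))) //.
by rewrite (nth_rl_decode_mkseq (leq_maxr j (J i))).
Qed.

(* The point of [2^omega] whose prefixes run-length decode to prefixes of [x]. *)
Definition branch_of (x : nat -> nat) : nat -> bool :=
  fun i => nth false (rl_encode (mkseq x i.+1)) i.

Lemma mkseq_branch_of x N j : (j <= N)%N ->
  mkseq (branch_of x) j = take j (rl_encode (mkseq x N)).
Proof.
move=> jN; have hN := size_rl_encode (mkseq x N); rewrite size_mkseq in hN.
apply: (@eq_from_nth _ false); rewrite ?size_mkseq ?size_takel //; try lia.
move=> i hi; rewrite nth_mkseq // nth_take // /branch_of.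
have iN : (i.+1 <= N)%N by lia.
rewrite -(subnKC iN) mkseqD rl_encode_cat nth_cat ifT //.
by have := size_rl_encode (mkseq x i.+1); rewrite size_mkseq.
Qed.

Lemma rl_decode_converges_branch_of x : rl_decode_converges (branch_of x) x.
Proof.
apply: rl_decode_converges_unbounded.
  move=> j m; rewrite (mkseq_branch_of x (leqnn j)) => hm.
  have := rl_decode_cat (take j (rl_encode (mkseq x j))) (drop j (rl_encode (mkseq x j))).
  rewrite cat_take_drop rl_encodeK => -[t xjE].
  have mj : (m < j)%N.
    by have := f_equal size xjE; rewrite size_cat size_mkseq; lia.
  by rewrite -(nth_mkseq 0%N x mj) [in RHS]xjE nth_cat hm.
move=> n; exists (size (rl_encode (mkseq x n))).
have hn := size_rl_encode (mkseq x n); rewrite size_mkseq in hn.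
rewrite (mkseq_branch_of x (leqnn _)); set N := size (rl_encode _).
have -> : mkseq x N = mkseq x n ++ mkseq (fun i => x (n + i)%N) (N - n).
  by rewrite -mkseqD subnKC.
by rewrite rl_encode_cat take_size_cat // rl_encodeK size_mkseq.
Qed.

Section CodedValue.
Variables (R : realType) (f : (nat -> nat) -> R).

(* Only the first half of [u] is decoded, so that the value along a branch is
   insensitive to continuations of bounded length; the two one-letter words are
   reserved to give the densities 1 and 0. *)
Definition coded_value (u : seq bool) : R :=
  if (size u <= 1)%N then (if u == [:: true] then 1 else 0)
  else f (baire_of_seq (rl_decode (take (size u)./2 u))).

Lemma converges_along_coded_value w x : baire_continuous f ->
  rl_decode_converges w x -> converges_along coded_value w (f x).
Proof.
move=> hf hx e he K; have [n hn] := hf x e he; have [P hP] := hx n.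
exists (2 * P + K + 2)%N => j v hj hv.
rewrite /coded_value size_cat size_mkseq ifF; last by apply/negbTE; lia.
rewrite takel_cat ?size_mkseq; last by lia.
rewrite take_mkseq; apply/ltW/hn => i hi; apply: hP hi; lia.
Qed.

End CodedValue.

Definition codes (R : realType) (S : set R) (V : seq bool -> R) : Prop :=
  [/\ forall u, 0 <= V u <= 1, V [:: true] = 1, V [:: false] = 0,
      forall w, exists2 l, ([set 0; 1] `|` S) l & converges_along V w l
    & forall l, S l -> exists w, converges_along V w l].

Lemma codes_set0 (R : realType) : codes set0 (fun u => if u == [:: true] then 1 else 0 : R).
Proof.
split=> // [u|w]; first by case: ifP => _; rewrite ?lexx ?ler01.
exists 0; first by left; left.
move=> e he K; exists 1%N => j v hj hv; rewrite ifF ?subrr ?normr0 ?ltW //.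
by apply/eqP => /(f_equal size); rewrite size_cat size_mkseq /=; lia.
Qed.

Lemma codes_range (R : realType) (f : (nat -> nat) -> R) : baire_continuous f ->
  (forall x, 0 <= f x <= 1) -> codes (range f) (coded_value f).
Proof.
move=> hf f01; split=> //.
- by move=> u; rewrite /coded_value; case: ifP => _ //; case: ifP => _; rewrite ?lexx ?ler01.
- move=> w; have [x hx] := rl_decode_converges_ex w.
  by exists (f x); [right; exists x | exact: converges_along_coded_value].
- move=> _ [x _ <-]; exists (branch_of x).
  exact/converges_along_coded_value/rl_decode_converges_branch_of.
Qed.

Lemma analytic_codes (R : realType) (S : set R) : analytic S ->
  (forall l, S l -> 0 <= l <= 1) -> exists V, codes S V.
Proof.
case=> [-> _|[f [hf fS]] S01]; first by eexists; exact: codes_set0.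
exists (coded_value f); rewrite -fS; apply: codes_range => // x.
by apply: S01; rewrite -fS; exists x.
Qed.

Definition spine_point (w : nat -> bool) : cantor := fun i => if odd i then true else w i./2.

Lemma spine_spine_point w : spine (spine_point w).
Proof. by move=> i; rewrite /spine_point addn1 /= mul2n odd_double. Qed.

Lemma spine_point_data w i : spine_point w (2 * i)%N = w i.
Proof. by rewrite /spine_point mul2n odd_double doubleK. Qed.

Section Range.
Variables (R : realType) (mu : {measure set cantorB -> \bar R}).
Hypothesis hmu : coin_tossing mu.
Variables (S : set R) (V : seq bool -> R).
Hypotheses (S01 : forall l, S l -> 0 <= l <= 1) (hV : codes S V).
Variable B : set cantor.
Hypotheses (mB : measurable (B : set cantorB))
  (hAB : A_open V `<=` B) (hBA : B `<=` A_closed V).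

Lemma density_exists z : exists2 l, density_is mu B z l & ([set 0; 1] `|` S) l.
Proof.
have [V01 _ _ V_lim _] := hV.
have [hz|hz] := pselect (spine z).
  have [l hl conv] := V_lim (fun i => z (2 * i)%N); exists l => //.
  have l01 : 0 <= l <= 1 by case: hl => [[]|/S01] // ->; rewrite ?lexx ?ler01.
  apply: (density_on_spine hmu mB hAB hBA V01 hz l01 conv).
have [k hk] := exists_leaves_spine_at hz.
exists (if fills V z k then 1 else 0); first exact: density_leaving_spine.
by left; case: fills; [right|left].
Qed.

Lemma solid_between : solid mu B.
Proof. by move=> z; apply; have [l hl _] := density_exists z; exists l. Qed.

Lemma ran_density_between : ran_density mu B = [set 0; 1] `|` S.
Proof.
have [V01 V1 V0 _ V_onto] := hV.
apply/seteqP; split => l.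
  move=> [z hz]; have [l' hl' Sl'] := density_exists z.
  by rewrite (cvg_unique _ hz hl').
case=> [[->|->]|Sl].
- exists (fun=> false).
  have hk : leaves_spine_at (fun=> false) 0 by split.
  have := density_leaving_spine hmu hAB hBA hk.
  by rewrite /fills (_ : data_bits _ 1 = [:: false]) // V0 dyadic_le_le0.
- exists (fun i => i == 0%N).
  have hk : leaves_spine_at (fun i => i == 0%N) 0 by split.
  have := density_leaving_spine hmu hAB hBA hk.
  by rewrite /fills (_ : data_bits _ 1 = [:: true]) // V1 dyadic_le_ge1.
- have [w hw] := V_onto l Sl; exists (spine_point w).
  apply: (density_on_spine hmu mB hAB hBA V01 (spine_spine_point w) (S01 Sl)).
  by move=> e he K; have [J hJ] := hw e he K; exists J => j v hj hv;
    rewrite (eq_mkseq (spine_point_data w)); apply: hJ.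
Qed.

End Range.

Theorem theorem5p1 (R : realType) (mu : {measure set cantorB -> \bar R})
  (hmu : coin_tossing mu) (S : set R)
  (hS : analytic S) (hS01 : S `<=` `]0, 1[) :
  (exists A : set cantor, c_closed A /\ solid mu A /\
      ran_density mu A = [set 0; 1] `|` S) /\
  (exists A' : set cantor, c_open A' /\ solid mu A' /\
      ran_density mu A' = [set 0; 1] `|` S).
Proof.
have S01 l : S l -> 0 <= l <= 1.
  by move=> /hS01; rewrite /= in_itv /= => /andP[l0 l1]; rewrite !ltW.
have [V hV] := analytic_codes hS S01.
have between B : measurable (B : set cantorB) -> A_open V `<=` B -> B `<=` A_closed V ->
    solid mu B /\ ran_density mu B = [set 0; 1] `|` S.
  move=> mB hAB hBA; split; first exact: (solid_between hmu S01 hV mB hAB hBA).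
  exact: (ran_density_between hmu S01 hV mB hAB hBA).
split.
  exists (A_closed V); split; first exact: A_closed_closed.
  by apply: between; [exact: measurable_A_closed | exact: subsetUl |].
exists (A_open V); split; first exact: A_open_open.
by apply: between; [exact: measurable_A_open | | exact: subsetUl].
Qed.
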